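(* Let $s=\tfrac12$ and $\lambda\in\mathbb{C}$. The only odd superderivation of $\mathfrak{L}^{1/2}_\lambda$ of degree $0$ is the zero map; in particular it coincides with the (zero) space of odd inner derivations of degree $0$.
   Context: For $s\in\{0,\tfrac12\}$ and $\lambda\in\mathbb{C}$, $\mathfrak{L}^s_\lambda$ is the complex Lie superalgebra with basis $\{L_m,I_m,G_p,H_p : m\in\mathbb{Z},\ p\in s+\mathbb{Z}\}$, even part spanned by the $L_m,I_m$, odd part spanned by the $G_p,H_p$, with brackets $[L_m,L_n]=(m-n)L_{m+n}$, $[L_m,I_n]=(m-n)I_{m+n}$, $[L_m,H_p]=(\tfrac m2-p)H_{m+p}$, $[L_m,G_p]=(\tfrac m2-p)G_{m+p}+\lambda(m+1)H_{m+p}$, $[I_m,G_p]=(m-2p)H_{m+p}$, $[G_p,G_q]=I_{p+q}$, plus super-antisymmetry; other brackets of basis elements are zero. $\mathfrak{L}_r$ is spanned by basis elements of index $r$. A superderivation of parity $a$ is a linear map shifting parity by $a$ and satisfying $D([x,y])=[D(x),y]+(-1)^{a|x|}[x,D(y)]$; it has degree $r$ if $D(\mathfrak{L}_q)\subset\mathfrak{L}_{q+r}$. *)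

From HB Require Import structures.
From mathcomp Require Import all_boot all_order all_algebra.
Set Implicit Arguments. Unset Strict Implicit. Unset Printing Implicit Defensive.
Import Order.TTheory GRing.Theory Num.Theory.
Local Open Scope ring_scope.

(* Index set of the basis of L^{1/2}_lambda:
   bL m = L_m, bI m = I_m (m : int),
   bG k = G_{k+1/2}, bH k = H_{k+1/2} (k : int), since s = 1/2. *)
Inductive bidx : Type := bL of int | bI of int | bG of int | bH of int.

Definition bidx_code (b : bidx) : nat * int :=
  match b with bL m => (0%N, m) | bI m => (1%N, m) | bG k => (2%N, k) | bH k => (3%N, k) end.
Definition bidx_decode (c : nat * int) : option bidx :=
  match c with
  | (0%N, m) => Some (bL m) | (1%N, m) => Some (bI m)
  | (2%N, k) => Some (bG k) | (3%N, k) => Some (bH k) | _ => None end.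
Lemma bidx_codeK : pcancel bidx_code bidx_decode. Proof. by case. Qed.
HB.instance Definition _ := Equality.copy bidx (pcan_type bidx_codeK).

(* parity: true = odd *)
Definition bpar (b : bidx) : bool :=
  match b with bL _ | bI _ => false | bG _ | bH _ => true end.

(* twice the index (degree): L_m, I_m have index m; G_{k+1/2}, H_{k+1/2}
   have index k + 1/2, so doubled degree 2k+1 *)
Definition bdeg2 (b : bidx) : int :=
  match b with bL m | bI m => 2 * m | bG k | bH k => 2 * k + 1 end.

Definition inspan (C : fieldType) (V : lmodType C) (e : bidx -> V)
  (P : pred bidx) (v : V) : Prop :=
  exists (s : seq bidx) (c : bidx -> C),
    all P s /\ v = \sum_(b <- s) c b *: e b.

Definition parpart (C : fieldType) (V : lmodType C) (e : bidx -> V) (a : bool) :=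
  inspan e (fun b => bpar b == a).

(* graded piece L_r, with r = d/2 *)
Definition degpart (C : fieldType) (V : lmodType C) (e : bidx -> V) (d : int) :=
  inspan e (fun b => bdeg2 b == d).

From HB Require Import structures.
From mathcomp Require Import all_boot all_order all_algebra zify.
Import Order.TTheory GRing.Theory Num.Theory.
Local Open Scope ring_scope.

Set Implicit Arguments.
Unset Strict Implicit.
Unset Printing Implicit Defensive.

(* For s = 1/2 the doubled index 2r of a basis element is odd exactly when the
   element is odd, so a vector of index r that is homogeneous of both parities
   vanishes.  An odd superderivation of degree 0 maps each basis vector e b to
   such a vector (same index, opposite parity), hence kills the basis; and an
   odd element of index 0 is already 0. *)

Lemma big_scale_undup (C : nzRingType) (V : lmodType C) (I : eqType)
    (e : I -> V) (s : seq I) (c : I -> C) :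
  \sum_(b <- s) c b *: e b = \sum_(b <- undup s) (c b *+ count_mem b s) *: e b.
Proof.
rewrite -big_undup_iterop_count; apply: eq_bigr => b _.
rewrite Monoid.iteropE; elim: (count_mem b s) => [|n IHn] /=.
  by rewrite mulr0n scale0r.
by rewrite IHn mulrS scalerDl.
Qed.

Lemma lin_map0 (C : pzRingType) (U V : lmodType C) (f : U -> V) :
  (forall (a : C) (x y : U), f (a *: x + y) = a *: f x + f y) -> f 0 = 0.
Proof. by move=> f_lin; have := f_lin (-1) 0 0; rewrite scaler0 addr0 scaleN1r addNr. Qed.

Section Span.
Variables (C : fieldType) (V : lmodType C) (e : bidx -> V).

Lemma inspan_basis (P : pred bidx) b : P b -> inspan e P (e b).
Proof. by exists [:: b], (fun _ => 1); rewrite big_seq1 scale1r /= andbT. Qed.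

Hypothesis e_free : forall (s : seq bidx) (c : bidx -> C), uniq s ->
  \sum_(b <- s) c b *: e b = 0 -> forall b, b \in s -> c b = 0.

Lemma inspan_disjoint (P Q : pred bidx) v :
  (forall b, P b -> ~~ Q b) -> inspan e P v -> inspan e Q v -> v = 0.
Proof.
move=> PnQ [s1 [c1 [Ps1 ->]]] [s2 [c2 [Qs2 v_eq]]].
have nQs1 b : b \in s1 -> b \notin s2.
  by move=> /(allP Ps1)/PnQ nQb; apply: contra nQb => /(allP Qs2).
(* The two expansions of v have disjoint supports, so their difference is a
   single vanishing combination over s1 ++ s2 with coefficients d. *)
pose d b := if b \in s1 then c1 b else - c2 b.
have sum_d : \sum_(b <- s1 ++ s2) d b *: e b = 0.
  have d_s1 : \sum_(b <- s1) d b *: e b = \sum_(b <- s1) c1 b *: e b.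
    by apply: eq_big_seq => b b_s1; rewrite /d b_s1.
  have d_s2 : \sum_(b <- s2) d b *: e b = - \sum_(b <- s2) c2 b *: e b.
    rewrite -sumrN; apply: eq_big_seq => b b_s2.
    by rewrite /d ifN ?scaleNr //; apply: contraL b_s2 => /nQs1.
  by rewrite big_cat d_s1 d_s2 v_eq; apply: subrr.
rewrite big_scale_undup in sum_d; rewrite big_scale_undup.
apply: big1_seq => b /andP[_]; rewrite mem_undup => b_s1.
have b_s12 : b \in undup (s1 ++ s2) by rewrite mem_undup mem_cat b_s1.
have := e_free (undup_uniq _) sum_d b_s12.
rewrite /d b_s1 count_cat (count_memPn (nQs1 b b_s1)) addn0 => ->.
exact: scale0r.
Qed.

End Span.

Lemma bdeg2_bpar b b' : bdeg2 b = bdeg2 b' -> bpar b = bpar b'.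
Proof. by case: b => k; case: b' => l //=; lia. Qed.

Lemma bdeg2_odd0 b : bpar b -> bdeg2 b != 0.
Proof. by case: b => k //= _; apply/eqP; lia. Qed.

Theorem lemma2p9 (C : numClosedFieldType) (lam : C) (V : lmodType C)
  (br : V -> V -> V) (e : bidx -> V)
  (* e is a basis of V *)
  (e_span : forall v : V, exists (s : seq bidx) (c : bidx -> C),
      v = \sum_(b <- s) c b *: e b)
  (e_free : forall (s : seq bidx) (c : bidx -> C), uniq s ->
      \sum_(b <- s) c b *: e b = 0 -> forall b, b \in s -> c b = 0)
  (* the bracket is bilinear *)
  (br_linl : forall (a : C) (x y z : V), br (a *: x + y) z = a *: br x z + br y z)
  (br_linr : forall (a : C) (x y z : V), br z (a *: x + y) = a *: br z x + br z y)
  (* super-antisymmetry on basis elements *)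
  (br_anti : forall b b' : bidx,
      br (e b') (e b) = - ((-1) ^+ (bpar b && bpar b') *: br (e b) (e b')))
  (* structure constants of L^{1/2}_lam; G_{k+1/2} = e (bG k), H_{k+1/2} = e (bH k) *)
  (br_LL : forall m n : int, br (e (bL m)) (e (bL n)) = (m - n)%:~R *: e (bL (m + n)))
  (br_LI : forall m n : int, br (e (bL m)) (e (bI n)) = (m - n)%:~R *: e (bI (m + n)))
  (br_LH : forall (m k : int), br (e (bL m)) (e (bH k))
      = ((m - 2 * k - 1)%:~R / 2) *: e (bH (m + k)))
  (br_LG : forall (m k : int), br (e (bL m)) (e (bG k))
      = ((m - 2 * k - 1)%:~R / 2) *: e (bG (m + k))
        + (lam * (m + 1)%:~R) *: e (bH (m + k)))
  (br_IG : forall (m k : int), br (e (bI m)) (e (bG k))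
      = (m - 2 * k - 1)%:~R *: e (bH (m + k)))
  (br_GG : forall (k l : int), br (e (bG k)) (e (bG l)) = e (bI (k + l + 1)))
  (br_II : forall m n : int, br (e (bI m)) (e (bI n)) = 0)
  (br_IH : forall (m k : int), br (e (bI m)) (e (bH k)) = 0)
  (br_GH : forall (k l : int), br (e (bG k)) (e (bH l)) = 0)
  (br_HH : forall (k l : int), br (e (bH k)) (e (bH l)) = 0) :
  (* every odd superderivation of degree 0 is zero *)
  (forall D : V -> V,
     (forall (a : C) (x y : V), D (a *: x + y) = a *: D x + D y) ->
     (forall (a : bool) (x : V), parpart e a x -> parpart e (~~ a) (D x)) ->
     (forall (d : int) (x : V), degpart e d x -> degpart e d (D x)) ->
     (forall (a : bool) (x y : V), parpart e a x ->
        D (br x y) = br (D x) y + (-1) ^+ a *: br x (D y)) ->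
     forall v : V, D v = 0)
  /\
  (* the space of odd inner derivations of degree 0 is zero *)
  (forall x : V, parpart e true x -> degpart e 0 x -> forall y : V, br x y = 0).
Proof.
split=> [D D_lin D_par D_deg _ v | x x_odd x_deg0 y].
  have D_e b : D (e b) = 0.
    apply: (inspan_disjoint e_free (P := fun b' => bpar b' == ~~ bpar b)
                                   (Q := fun b' => bdeg2 b' == bdeg2 b)).
    - by move=> b' /eqP par_b'; apply/eqP => /bdeg2_bpar; rewrite par_b'; case: bpar.
    - exact/D_par/inspan_basis.
    - exact/D_deg/inspan_basis.
  have [s [c ->]] := e_span v; elim: s => [|b s IHs].
    by rewrite big_nil (lin_map0 D_lin).
  by rewrite big_cons D_lin D_e scaler0 add0r.
have -> : x = 0.
  apply: (inspan_disjoint e_free _ x_odd x_deg0) => b /eqP.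
  exact: bdeg2_odd0.
exact: (lin_map0 (f := br^~ y) (fun a x z => br_linl a x z y)).
Qed.
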